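(* Let $f\colon V_0\to\mathbb{R}$ be continuous such that $\Gamma_f$ is a ruled surface, let $\sigma_+(z)=\max\{m:L_{Z^z,m}\subset\Gamma_f\}$, and let $m_\infty=\lim_{t\to\infty}\sigma_+(t)$ and $m_{-\infty}=\lim_{t\to-\infty}\sigma_+(t)$ (limits in $[-\infty,\infty]$). For $t>0$ let $f_t(p)=t^{-1}f(s_{t,t}(p))$, so that $\Gamma_{f_t}=s_{t,t}^{-1}(\Gamma_f)$. For $x\neq0$ define $$F(x,0,z)=\begin{cases} m_{-\infty}x & \text{if } m_{-\infty}<\infty \text{ and } z\le-\frac{m_{-\infty}}2x^2,\\ -\frac{2z}{x} & \text{if } -\frac{m_{-\infty}}2x^2<z<-\frac{m_\infty}2x^2,\\ m_\infty x & \text{if } m_\infty>-\infty \text{ and } z\ge-\frac{m_\infty}2x^2.\end{cases}$$ Then $f_t\to F$ pointwise almost everywhere on $V_0$ as $t\to\infty$.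
   Context: $\mathbb{H}$ is $\mathbb{R}^3$ with product $(x,y,z)\cdot(x',y',z')=(x+x',y+y',z+z'+\frac{xy'-yx'}{2})$; $X=(1,0,0)$, $Y=(0,1,0)$, $Z=(0,0,1)$, $v^t=tv$. A horizontal line is $\{p\cdot tv\}$ with $v=(a,b,0)\neq0$; $L_{p,m}=\{p\cdot(X+mY)^t:t\in\mathbb{R}\}$. A ruled surface is a union of horizontal line segments (rulings) with endpoints in its boundary. $V_0=\{(x,0,z)\}$ with Lebesgue measure, $\Gamma_f=\{u\cdot Y^{f(u)}:u\in V_0\}$, $s_{t,t}(x,y,z)=(tx,ty,t^2z)$. (The function $\sigma_+$ is well defined and nonincreasing, so the limits exist.) *)

From HB Require Import structures.
From mathcomp Require Import all_boot all_order all_algebra.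
From mathcomp Require Import all_classical all_reals all_analysis.
Set Implicit Arguments. Unset Strict Implicit. Unset Printing Implicit Defensive.
Import Order.TTheory GRing.Theory Num.Theory.
Import numFieldNormedType.Exports.
Local Open Scope classical_set_scope.
Local Open Scope ring_scope.

Section Heis.
Variable R : realType.

(* Points of the Heisenberg group H = R^3, written ((x, y), z). *)
Definition hmul (p q : R * R * R) : R * R * R :=
  (p.1.1 + q.1.1, p.1.2 + q.1.2,
   p.2 + q.2 + (p.1.1 * q.1.2 - p.1.2 * q.1.1) / 2).

Definition hline (p : R * R * R) (a b : R) : set (R * R * R) :=
  [set hmul p (t * a, t * b, 0) | t in [set: R]].

Definition Lline (p : R * R * R) (m : R) := hline p 1 m.

(* V_0 = {(x,0,z)} is identified with R * R via (x, z).
   Gamma_f = { u . Y^{f(u)} : u in V_0 } *)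
Definition Gamma (f : R * R -> R) : set (R * R * R) :=
  [set hmul (u.1, 0, u.2) (0, f u, 0) | u in [set: R * R]].

(* A surface without boundary (such as Gamma_f, f continuous) is ruled iff
   every point lies on a full horizontal line contained in the surface. *)
Definition ruled (S : set (R * R * R)) : Prop :=
  forall q, S q -> exists a b : R, (a, b) != (0, 0) /\ hline q a b `<=` S.

(* sigma_+(z) = max { m : L_{Z^z, m} in Gamma_f } (taken as a sup in \bar R;
   it is a max under the hypothesis of the theorem) *)
Definition sigma_plus (f : R * R -> R) (z : R) : \bar R :=
  ereal_sup [set m%:E | m in [set m : R | Lline (0, 0, z) m `<=` Gamma f]].

Definition m_pinfty (f : R * R -> R) : \bar R :=
  lim (sigma_plus f x @[x --> +oo]).
Definition m_ninfty (f : R * R -> R) : \bar R :=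
  lim (sigma_plus f x @[x --> -oo]).

(* f_t(p) = t^{-1} f(s_{t,t}(p)), s_{t,t}(x,0,z) = (t x, 0, t^2 z) *)
Definition f_resc (f : R * R -> R) (t : R) (p : R * R) : R :=
  t^-1 * f (t * p.1, t ^+ 2 * p.2).

(* The limit function F(x,0,z), meaningful for x <> 0. *)
Definition Flim (mp mn : \bar R) (p : R * R) : R :=
  let x := p.1 in let z := p.2 in
  if ((mn < +oo)%E && (z%:E <= - mn * (x ^+ 2 / 2)%:E)%E) then fine mn * x
  else if ((mp > -oo)%E && (z%:E >= - mp * (x ^+ 2 / 2)%:E)%E) then fine mp * x
  else - (2 * z) / x.

End Heis.

(* Through every point of the z-axis there is a ruling of Gamma_f, so f vanishes on the
   axis.  The ruling through any other point (X, 0, Z) of V_0 cannot be parallel to Y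
   (Gamma_f is a graph), hence it reaches the axis: it is a line L_{Z^w, m} with
   f(X, Z) = m X and w = Z + m X^2/2.  Two such lines never cross, so the slope does not
   increase with the height w, and every slope lies between m_oo and m_{-oo}.
   For p = (x, z), the slope u_t = f_t(p)/x belongs to the ruling through s_{t,t}(p), which
   meets the axis at height t^2 x^2/2 (u_t - c) with c = -2z/x^2.  For large t, u_t cannot
   reach max(c, m_oo) + e: that height would then be huge, where all slopes are below this
   bound; symmetrically from below.  Hence u_t tends to c clamped to [m_oo, m_{-oo}], which is
   F(p)/x. *)

From HB Require Import structures.
From mathcomp Require Import all_boot all_order all_algebra.
From mathcomp Require Import all_classical all_reals all_analysis.
From mathcomp Require Import ring lra.
Import Order.TTheory GRing.Theory Num.Theory.
Import numFieldNormedType.Exports.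
Local Open Scope classical_set_scope.
Local Open Scope ring_scope.
Set Implicit Arguments.
Unset Strict Implicit.
Unset Printing Implicit Defensive.

Section RuledGraphs.
Variables (R : realType) (f : R * R -> R).

Lemma GammaE x y w : Gamma f (x, y, w) <-> f (x, w - x * y / 2) = y.
Proof.
split.
- move=> [[u1 u2] _ [<- <- <-]].
  by rewrite !addr0 add0r (_ : _ - _ = u2) //; ring.
- move=> fxy; exists (x, w - x * y / 2) => //.
  by rewrite /hmul /= fxy; congr (_, _, _); ring.
Qed.

Lemma hline_subE x y w a b :
  hline (x, y, w) a b `<=` Gamma f <->
  forall s : R,
    f (x + s * a, w - x * y / 2 - s * a * y - s ^+ 2 * a * b / 2) = y + s * b.
Proof.
split.
- move=> sub s.
  have /sub/GammaE : hline (x, y, w) a b (hmul (x, y, w) (s * a, s * b, 0)) by exists s.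
  by rewrite /hmul /= addr0; congr (f (_, _) = _); field.
- move=> fline _ [s _ <-]; apply/GammaE.
  by rewrite /hmul /= addr0 -[in RHS]fline; congr (f (_, _)); field.
Qed.

Definition axis_ruling (z m : R) := forall s : R, f (s, z - s ^+ 2 * m / 2) = s * m.

Lemma Lline_subE z m : Lline (0, 0, z) m `<=` Gamma f <-> axis_ruling z m.
Proof.
rewrite /Lline hline_subE /axis_ruling.
by split=> fline s; have := fline s; rewrite !(mul0r, add0r, mulr1, mulr0, subr0) => ->.
Qed.

Lemma axis_ruling_axis z m : axis_ruling z m -> f (0, z) = 0.
Proof. by move=> /(_ 0); rewrite expr0n /= !mul0r subr0. Qed.

Lemma axis_ruling_nonincreasing z1 z2 m1 m2 :
  axis_ruling z1 m1 -> axis_ruling z2 m2 -> z1 < z2 -> m2 <= m1.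
Proof.
move=> r1 r2 lt_z12; rewrite leNgt; apply/negP => lt_m12.
(* the two lines would meet above the abscissa s, where f would be both s m1 and s m2 *)
pose s := Num.sqrt (2 * (z2 - z1) / (m2 - m1)).
have s_gt0 : 0 < s by rewrite sqrtr_gt0 divr_gt0 ?mulr_gt0 ?subr_gt0.
have s2E : s ^+ 2 = 2 * (z2 - z1) / (m2 - m1).
  by rewrite sqr_sqrtr // ltW // divr_gt0 ?mulr_gt0 ?subr_gt0.
have meet : z1 - s ^+ 2 * m1 / 2 = z2 - s ^+ 2 * m2 / 2.
  by rewrite s2E; field; rewrite subr_eq0 gt_eqF.
have := r1 s; rewrite meet r2 => /(mulfI (lt0r_neq0 s_gt0)) m21.
by move: lt_m12; rewrite m21 ltxx.
Qed.

Lemma ruled_axis_ruling (X Z : R) :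
  ruled (Gamma f) -> (forall z, f (0, z) = 0) -> X != 0 ->
  exists m, axis_ruling (Z + X ^+ 2 * m / 2) m /\ f (X, Z) = X * m.
Proof.
move=> ruledG f_axis X_neq0; set w := f (X, Z).
have /ruledG [a [b [ab_neq0]]] : Gamma f (X, w, Z + X * w / 2).
  by apply/GammaE; rewrite addrK.
rewrite hline_subE addrK => fline.
have a_neq0 : a != 0.
  (* otherwise f would take the two values w and w + b at (X, Z) *)
  apply: contraNneq ab_neq0 => a0; rewrite a0 xpair_eqE eqxx /=.
  by have := fline 1; rewrite a0 !mulr0 !mul0r !subr0 addr0 mul1r -/w => wb; apply/eqP; lra.
set m := b / a.
have fuE u : f (u, Z + X ^+ 2 * m / 2 - u ^+ 2 * m / 2 - (u - X) * (w - X * m))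
               = w + (u - X) * m.
  have := fline ((u - X) / a).
  rewrite /m (_ : X + _ = u); last by field.
  by congr (f (_, _) = _); field.
have w_eq : w = X * m.
  by have := fuE 0; rewrite f_axis sub0r mulNr => /esym/eqP; rewrite subr_eq0 => /eqP.
exists m; split => [s|//].
by have := fuE s; rewrite -w_eq subrr mulr0 subr0 => ->; rewrite w_eq; ring.
Qed.

End RuledGraphs.

(* For mp <= mn, L is c = -2z/x^2 clamped to [mp, mn]; z + L x^2/2 has the sign of L - c. *)
Lemma Flim_bounds (R : realType) (mp mn : \bar R) (x z : R) :
  x != 0 -> (-oo < mn)%E -> (mp < +oo)%E ->
  let L := Flim mp mn (x, z) / x in
  (mn = L%:E \/ (mp <= L%:E)%E /\ 0 <= z + L * (x ^+ 2 / 2)) /\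
  (mp = L%:E \/ (L%:E <= mn)%E /\ z + L * (x ^+ 2 / 2) <= 0).
Proof.
move=> x_neq0 mn_gtNy mp_ltp L.
have k_gt0 : 0 < x ^+ 2 / 2 by rewrite divr_gt0 ?exprn_even_gt0.
have cE : - (2 * z) / x / x * (x ^+ 2 / 2) = - z by field.
move: mn_gtNy mp_ltp @L; rewrite /Flim /=.
case: mn => [N||] // _; case: mp => [P||] // _ /=;
  rewrite ?ltry ?ltNyr /= -?EFinN -?EFinM ?lee_fin;
  do 2?[case: ifPn => [?|]; last rewrite -ltNge => ?]; rewrite ?mulfK //;
  split; by [left | right; split; rewrite ?leNye ?leey ?lee_fin //; nra].
Qed.

Section AxisSlopes.
Variables (R : realType) (f : R * R -> R).
Hypothesis max_ruling : forall z, exists m,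
  axis_ruling f z m /\ forall m', axis_ruling f z m' -> m' <= m.

Lemma sigma_plus_max z : exists m, axis_ruling f z m /\ sigma_plus f z = m%:E.
Proof.
have [m [rm max_m]] := max_ruling z; exists m; split => //.
apply/eqP; rewrite eq_le; apply/andP; split.
- by apply: ge_ereal_sup => _ [m' /Lline_subE /max_m m'm <-]; rewrite lee_fin.
- by apply: ereal_sup_ubound; exists m => //; apply/Lline_subE.
Qed.

Lemma sigma_plus_ge z m : axis_ruling f z m -> (m%:E <= sigma_plus f z)%E.
Proof. by move=> rm; apply: ereal_sup_ubound; exists m => //; apply/Lline_subE. Qed.

Lemma sigma_plus_nonincreasing :
  {homo sigma_plus f : z1 z2 / z1 <= z2 >-> (z2 <= z1)%E}.
Proof.
move=> z1 z2; rewrite le_eqVlt => /orP[/eqP -> //|lt_z12].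
have [m1 [r1 ->]] := sigma_plus_max z1; have [m2 [r2 ->]] := sigma_plus_max z2.
by rewrite lee_fin; apply: axis_ruling_nonincreasing r1 r2 lt_z12.
Qed.

Lemma m_pinftyE : m_pinfty f = ereal_inf (range (sigma_plus f)).
Proof. exact/cvg_lim/nonincreasing_cvge/sigma_plus_nonincreasing. Qed.

Lemma m_ninftyE : m_ninfty f = ereal_sup (range (sigma_plus f \o -%R)).
Proof.
apply/cvg_lim => //; apply/cvgNy_compNP/nondecreasing_cvge => z1 z2 le_z12 /=.
by apply: sigma_plus_nonincreasing; rewrite lerN2.
Qed.

Lemma m_ninfty_ge z m : axis_ruling f z m -> (m%:E <= m_ninfty f)%E.
Proof.
move=> /sigma_plus_ge le_m; rewrite m_ninftyE; apply: le_trans le_m _.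
by apply: ereal_sup_ubound; exists (- z) => //=; rewrite opprK.
Qed.

Lemma m_pinfty_le z m : axis_ruling f z m -> (m_pinfty f <= m%:E)%E.
Proof.
move=> rm; have [m' [rm' sm']] := sigma_plus_max (z + 1).
rewrite m_pinftyE; apply: le_trans (ereal_inf_lbound _) _; first by exists (z + 1).
by rewrite sm' lee_fin; apply: axis_ruling_nonincreasing rm rm' _; rewrite ltrDl.
Qed.

Lemma m_pinfty_lt a : (m_pinfty f < a%:E)%E ->
  exists Z, forall z m, Z <= z -> axis_ruling f z m -> m < a.
Proof.
rewrite m_pinftyE => /ereal_inf_lt [_ [Z _ <-]] sZa; exists Z => z m le_Zz rm.
rewrite -lte_fin; apply: le_lt_trans sZa.
exact: le_trans (sigma_plus_ge rm) (sigma_plus_nonincreasing le_Zz).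
Qed.

Lemma m_ninfty_gt a : (a%:E < m_ninfty f)%E ->
  exists Z, forall z m, z <= Z -> axis_ruling f z m -> a < m.
Proof.
rewrite m_ninftyE => /ereal_sup_gt [_ [Z _ <-]] /=.
have [m' [rm' ->]] := sigma_plus_max (- Z); rewrite lte_fin => am'.
exists (- Z - 1) => z m le_z rm; apply: lt_le_trans am' _.
by apply: axis_ruling_nonincreasing rm rm' _; lra.
Qed.

End AxisSlopes.

Lemma nbhs_pinfty_ge_sqrM (R : realType) (Z k : R) : 0 < k ->
  \forall t \near +oo, Z <= t ^+ 2 * k.
Proof.
move=> k_gt0; near=> t.
have t_ge1 : 1 <= t by near: t; apply: nbhs_pinfty_ge.
have Zt : Z / k <= t by near: t; apply: nbhs_pinfty_ge; rewrite num_real.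
rewrite -ler_pdivrMr // (le_trans Zt) // expr2 ler_peMl //; lra.
Unshelve. all: by end_near.
Qed.

Section Rescaling.
Variables (R : realType) (f : R * R -> R).
Hypothesis ruledG : ruled (Gamma f).
Hypothesis max_ruling : forall z, exists m,
  axis_ruling f z m /\ forall m', axis_ruling f z m' -> m' <= m.
Variables (x z : R).
Hypothesis x_neq0 : x != 0.

Let k := x ^+ 2 / 2.
(* [u t] is the slope of the ruling through s_{t,t}(x, 0, z), which meets the axis at
   height t^2 (z + u t * k). *)
Let u t := f_resc f t (x, z) / x.

Let k_gt0 : 0 < k. Proof. by rewrite divr_gt0 ?exprn_even_gt0. Qed.

Lemma axis_ruling_rescaled (t : R) :
  0 < t -> axis_ruling f (t ^+ 2 * (z + u t * k)) (u t).
Proof.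
move=> t_gt0; have f_axis (z0 : R) : f (0, z0) = 0.
  by have [m [/axis_ruling_axis]] := max_ruling z0.
have tx_neq0 : t * x != 0 by rewrite mulf_neq0 // lt0r_neq0.
have [m [rm fm]] := ruled_axis_ruling (t ^+ 2 * z) ruledG f_axis tx_neq0.
have -> : u t = m by rewrite /u /f_resc /= fm; field; rewrite x_neq0 lt0r_neq0.
by rewrite (_ : _ * _ = t ^+ 2 * z + (t * x) ^+ 2 * m / 2) // /k; field.
Qed.

Lemma rescaled_slope_lt (a : R) : (m_pinfty f < a%:E)%E -> 0 < z + a * k ->
  \forall t \near +oo, u t < a.
Proof.
move=> /(m_pinfty_lt max_ruling) [Z Z_lt] za_gt0; near=> t.
have t_gt0 : 0 < t by near: t; apply: nbhs_pinfty_gt.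
have Zt : Z <= t ^+ 2 * (z + a * k) by near: t; apply: nbhs_pinfty_ge_sqrM.
rewrite ltNge; apply/negP => le_au; suff : u t < a by lra.
apply: Z_lt (axis_ruling_rescaled t_gt0); apply: le_trans Zt _.
by rewrite ler_wpM2l ?sqr_ge0 // lerD2l ler_wpM2r // ltW.
Unshelve. all: by end_near.
Qed.

Lemma rescaled_slope_gt (a : R) : (a%:E < m_ninfty f)%E -> z + a * k < 0 ->
  \forall t \near +oo, a < u t.
Proof.
move=> /(m_ninfty_gt max_ruling) [Z Z_gt] za_lt0; near=> t.
have t_gt0 : 0 < t by near: t; apply: nbhs_pinfty_gt.
have Zt : - Z <= t ^+ 2 * - (z + a * k) by near: t; apply: nbhs_pinfty_ge_sqrM; lra.
rewrite ltNge; apply/negP => le_ua; suff : a < u t by lra.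
apply: Z_gt (axis_ruling_rescaled t_gt0); rewrite -lerN2; apply: le_trans Zt _.
by rewrite mulrN lerN2 ler_wpM2l ?sqr_ge0 // lerD2l ler_wpM2r // ltW.
Unshelve. all: by end_near.
Qed.

Lemma f_resc_cvg :
  f_resc f t (x, z) @[t --> +oo] --> Flim (m_pinfty f) (m_ninfty f) (x, z).
Proof.
have [m0 [rm0 _]] := max_ruling 0.
have [upper lower] := Flim_bounds z x_neq0
  (lt_le_trans (ltNyr m0) (m_ninfty_ge max_ruling rm0))
  (le_lt_trans (m_pinfty_le max_ruling rm0) (ltry m0)).
move: upper lower; set L := Flim _ _ _ / x => upper lower.
suff u_cvg : u t @[t --> +oo] --> L.
  have xu_cvg : x * u t @[t --> +oo] --> x * L by apply: cvgMl_tmp.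
  rewrite /L mulrC divfK // in xu_cvg; apply: cvg_trans xu_cvg.
  by apply: near_eq_cvg; near=> t; rewrite /u mulrC divfK.
apply/cvgrPdist_lt => e e_gt0.
have u_lt : \forall t \near +oo, u t < L + e.
  case: upper => [mnE | [mpL zL]].
    near=> t; have t_gt0 : 0 < t by near: t; apply: nbhs_pinfty_gt.
    have := m_ninfty_ge max_ruling (axis_ruling_rescaled t_gt0).
    by rewrite mnE lee_fin; lra.
  apply: rescaled_slope_lt.
    by apply: le_lt_trans mpL _; rewrite lte_fin ltrDl.
  by rewrite mulrDl; have := mulr_gt0 e_gt0 k_gt0; rewrite /k in zL *; lra.
have u_gt : \forall t \near +oo, L - e < u t.
  case: lower => [mpE | [mnL zL]].
    near=> t; have t_gt0 : 0 < t by near: t; apply: nbhs_pinfty_gt.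
    have := m_pinfty_le max_ruling (axis_ruling_rescaled t_gt0).
    by rewrite mpE lee_fin; lra.
  apply: rescaled_slope_gt.
    by apply: lt_le_trans mnL; rewrite lte_fin gtrDl oppr_lt0.
  by rewrite mulrDl mulNr; have := mulr_gt0 e_gt0 k_gt0; rewrite /k in zL *; lra.
near=> t; rewrite ltr_distlC; apply/andP; split; near: t => //.
Unshelve. all: by end_near.
Qed.

End Rescaling.

Theorem lemma4p5 (R : realType) (f : R * R -> R)
  (hf : continuous f)
  (hruled : ruled (Gamma f))
  (hmax : forall z : R, exists m : R, Lline (0, 0, z) m `<=` Gamma f /\
            (forall m' : R, Lline (0, 0, z) m' `<=` Gamma f -> m' <= m)) :
  {ae ((@lebesgue_measure R) \x (@lebesgue_measure R))%E,
    forall p : R * R, p.1 != 0 ->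
      f_resc f t p @[t --> +oo] --> Flim (m_pinfty f) (m_ninfty f) p}.
Proof.
have max_ruling z : exists m,
    axis_ruling f z m /\ forall m', axis_ruling f z m' -> m' <= m.
  have [m [/Lline_subE rm max_m]] := hmax z.
  by exists m; split=> // m' /Lline_subE /max_m.
have cvg_at (p : R * R) : p.1 != 0 ->
    f_resc f t p @[t --> +oo] --> Flim (m_pinfty f) (m_ninfty f) p.
  by case: p => x z /= x_neq0; exact: (@f_resc_cvg R f hruled max_ruling x z x_neq0).
by apply: aeW => p; exact: cvg_at.
Qed.
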